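(* Let $f\colon M\to\mathbb H$ be a minimal conformal immersion on a simply connected Riemann surface with right normal $R$ and conjugate $f^*$. Let $\mu\in\mathbb C\setminus\{0,1\}$, $m\in\mathbb H_*$, $\hat a=m\frac{\mu+\mu^{-1}}2m^{-1}$, $\hat b=mi\frac{\mu^{-1}-\mu}2m^{-1}$, $\rho=m\frac{i(1+\mu)}{1-\mu}m^{-1}$, and consider the minimal surface $h=f\hat b+f^*(\hat a-1)$ in the right associated family of $f$, with conjugate $h^*=f^*\hat b-f(\hat a-1)$ and right normal $R_h=(\rho+R)R(\rho+R)^{-1}$. Then $$(fR-f^* )(R+\rho)^{-1}=-\tfrac12\big(hR_h-h^*\big).$$ Consequently every non-constant $\mu$-Darboux transform $f^\sharp=(fR-f^* )(R+\rho)^{-1}$ of $f$ is the associated Willmore surface $gR_g-g^*$ of the minimal surface $g=-\tfrac12 h$ in the right associated family of $f$.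
   Context: Quaternions $\mathbb H$, $\mathbb H_*=\mathbb H\setminus\{0\}$, $\mathbb C=\operatorname{span}_{\mathbb R}\{1,i\}$. $*\omega(X)=\omega(JX)$; right normal defined by $*df=-df\,R$; conjugate surface $df^*=-*df$. The right associated family of $f$ consists of the minimal surfaces $fp+f^*q$, $p,q\in\mathbb H$. For a minimal surface $g$ with right normal $R_g$ and conjugate $g^*$, the associated Willmore surface is $g^\flat=gR_g-g^*$. The non-constant $\mu$-Darboux transforms of $f$ (line bundles spanned by parallel sections of the associated family of flat connections of the conformal Gauss map of $f$ at $\lambda=\mu$, not of the form $(n,0)^t$) are exactly the maps $(fR-f^* )(R+\rho)^{-1}$ with $m\in\mathbb H_*$ and $f^*$ a conjugate surface. *)

From Stdlib Require Import Reals.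
Open Scope R_scope.

Record quat := mkQ { qr : R; qi : R; qj : R; qk : R }.

Definition qzero : quat := mkQ 0 0 0 0.
Definition qone  : quat := mkQ 1 0 0 0.
Definition qI    : quat := mkQ 0 1 0 0.
Definition qadd (a b : quat) : quat :=
  mkQ (qr a + qr b) (qi a + qi b) (qj a + qj b) (qk a + qk b).
Definition qopp (a : quat) : quat := mkQ (- qr a) (- qi a) (- qj a) (- qk a).
Definition qsub (a b : quat) : quat := qadd a (qopp b).
Definition qscal (s : R) (a : quat) : quat :=
  mkQ (s * qr a) (s * qi a) (s * qj a) (s * qk a).
Definition qmul (a b : quat) : quat :=
  mkQ (qr a * qr b - qi a * qi b - qj a * qj b - qk a * qk b)
      (qr a * qi b + qi a * qr b + qj a * qk b - qk a * qj b)
      (qr a * qj b - qi a * qk b + qj a * qr b + qk a * qi b)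
      (qr a * qk b + qi a * qj b - qj a * qi b + qk a * qr b).
Definition qnorm2 (a : quat) : R := qr a ^ 2 + qi a ^ 2 + qj a ^ 2 + qk a ^ 2.
Definition qdot (a b : quat) : R :=
  qr a * qr b + qi a * qi b + qj a * qj b + qk a * qk b.
Definition qconj (a : quat) : quat := mkQ (qr a) (- qi a) (- qj a) (- qk a).
(* inverse (meaningful for a <> 0) *)
Definition qinv (a : quat) : quat := qscal (/ qnorm2 a) (qconj a).

Definition in_C (a : quat) : Prop := qj a = 0 /\ qk a = 0.

Definition pt := (R * R)%type.

Definition is_open (U : pt -> Prop) : Prop :=
  forall p, U p -> exists e, 0 < e /\
    forall q, (fst q - fst p) ^ 2 + (snd q - snd p) ^ 2 < e ^ 2 -> U q.

Definition hderiv (g : R -> quat) (t : R) (D : quat) : Prop :=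
  derivable_pt_lim (fun s => qr (g s)) t (qr D) /\
  derivable_pt_lim (fun s => qi (g s)) t (qi D) /\
  derivable_pt_lim (fun s => qj (g s)) t (qj D) /\
  derivable_pt_lim (fun s => qk (g s)) t (qk D).

Definition pd_x (F : pt -> quat) (p : pt) (D : quat) : Prop :=
  hderiv (fun s => F (s, snd p)) (fst p) D.
Definition pd_y (F : pt -> quat) (p : pt) (D : quat) : Prop :=
  hderiv (fun s => F (fst p, s)) (snd p) D.

Definition conformal_immersion (U : pt -> Prop) (f : pt -> quat) : Prop :=
  forall p, U p -> exists fx fy, pd_x f p fx /\ pd_y f p fy /\
    fx <> qzero /\ qnorm2 fx = qnorm2 fy /\ qdot fx fy = 0.

(* minimal conformal immersion: conformal immersion with d*df = 0,
   i.e. f harmonic: f_xx + f_yy = 0 *)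
Definition minimal_conformal_immersion (U : pt -> Prop) (f : pt -> quat) : Prop :=
  conformal_immersion U f /\
  exists fx fy : pt -> quat,
    (forall p, U p -> pd_x f p (fx p) /\ pd_y f p (fy p)) /\
    (forall p, U p -> exists fxx fyy,
        pd_x fx p fxx /\ pd_y fy p fyy /\ qadd fxx fyy = qzero).

(* With J d_x = d_y, J d_y = - d_x and *w(X) = w(JX):
   right normal  *df = - df R   <=>  f_y = - f_x R  and  - f_x = - f_y R *)
Definition right_normal (U : pt -> Prop) (f Rn : pt -> quat) : Prop :=
  forall p, U p -> exists fx fy, pd_x f p fx /\ pd_y f p fy /\
    fy = qopp (qmul fx (Rn p)) /\ qopp fx = qopp (qmul fy (Rn p)).

(* conjugate surface  df^* = - *df  <=>  fs_x = - f_y  and  fs_y = f_x *)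
Definition conjugate_surface (U : pt -> Prop) (f fs : pt -> quat) : Prop :=
  forall p, U p -> exists fx fy, pd_x f p fx /\ pd_y f p fy /\
    pd_x fs p (qopp fy) /\ pd_y fs p fx.

Definition a_hat (m mu : quat) : quat :=
  qmul (qmul m (qscal (1/2) (qadd mu (qinv mu)))) (qinv m).
Definition b_hat (m mu : quat) : quat :=
  qmul (qmul m (qmul qI (qscal (1/2) (qsub (qinv mu) mu)))) (qinv m).
Definition rho_of (m mu : quat) : quat :=
  qmul (qmul m (qmul (qmul qI (qadd qone mu)) (qinv (qsub qone mu)))) (qinv m).

Definition willmore_assoc (g Rg gs : pt -> quat) (p : pt) : quat :=
  qsub (qmul (g p) (Rg p)) (gs p).

(* Put A = a^ - 1, so that h = f (rho A) + f^* A.  Since a^, b^ and rho are conjugates by m of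
   complex numbers, b^ = rho A, rho A = A rho and A (1 + rho^2) = -2; moreover R^2 = -1.  The
   key consequence is that S A S commutes with R for S = rho + R: as dh = df S A, this makes
   S R S^-1 the right normal of h, and the coefficients of f and f^* in h S R - h^* S collapse to
   -2 R and 2, which is the Willmore identity after dividing by S. *)

From Stdlib Require Import Reals Lra.
Open Scope R_scope.

Declare Scope quat_scope.
Delimit Scope quat_scope with H.
Notation "0" := qzero : quat_scope.
Notation "1" := qone : quat_scope.
Infix "+" := qadd : quat_scope.
Infix "-" := qsub : quat_scope.
Notation "- x" := (qopp x) : quat_scope.
Infix "*" := qmul : quat_scope.

Lemma quat_eq a1 a2 a3 a4 b1 b2 b3 b4 :
  a1 = b1 -> a2 = b2 -> a3 = b3 -> a4 = b4 -> mkQ a1 a2 a3 a4 = mkQ b1 b2 b3 b4.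
Proof. intros; subst; reflexivity. Qed.

(* Identities of quaternion polynomials, checked componentwise; [qinv] terms are treated as atoms. *)
Ltac qring :=
  repeat match goal with |- context [qinv ?x] => generalize (qinv x); intro end;
  repeat match goal with
    q : quat |- _ => match goal with H : context [q] |- _ => clear H end
  end;
  repeat match goal with
    q : quat |- _ => match goal with |- context [q] => destruct q end
  end;
  cbv beta iota zeta delta [qsub qadd qopp qscal qmul qone qzero qI qr qi qj qk];
  apply quat_eq; first [ring | field].

Local Open Scope quat_scope.

Lemma qnorm2_neq0 a : a <> 0 -> qnorm2 a <> 0%R.
Proof.
  destruct a as [x y z w]; unfold qnorm2; simpl; intros Ha E; apply Ha.
  assert (x = 0%R) by nra; assert (y = 0%R) by nra; assert (z = 0%R) by nra;
  assert (w = 0%R) by nra; subst; reflexivity.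
Qed.

Lemma qmulV a : a <> 0 -> a * qinv a = 1.
Proof.
  intro Ha; pose proof (qnorm2_neq0 a Ha) as N; destruct a; unfold qnorm2 in N;
  unfold qinv, qscal, qconj, qnorm2; qring; exact N.
Qed.

Lemma qmulVl a : a <> 0 -> qinv a * a = 1.
Proof.
  intro Ha; pose proof (qnorm2_neq0 a Ha) as N; destruct a; unfold qnorm2 in N;
  unfold qinv, qscal, qconj, qnorm2; qring; exact N.
Qed.

Lemma qadd_comm a b : a + b = b + a.
Proof. qring. Qed.

Lemma qmul_assoc a b c : a * (b * c) = a * b * c.
Proof. qring. Qed.

Lemma qmul1r a : a * 1 = a.
Proof. qring. Qed.

Lemma qscal_mull c a b : qscal c a * b = qscal c (a * b).
Proof. qring. Qed.

Lemma qscal_mul_add c u v P Q : qscal c (u * P + v * Q) = u * qscal c P + v * qscal c Q.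
Proof. qring. Qed.

Lemma qscal_mul_sub c u N v : qscal c (u * N - v) = qscal c u * N - qscal c v.
Proof. qring. Qed.

Lemma qsub_neq0 a b : a <> b -> a - b <> 0.
Proof. intros Hab E; apply Hab; transitivity (a - b + b); [|rewrite E]; qring. Qed.

Lemma qinv_complex x y : (x * x + y * y <> 0)%R ->
  qinv (mkQ x y 0 0) = mkQ (x / (x * x + y * y)) (- y / (x * x + y * y)) 0 0.
Proof.
  intro N; unfold qinv, qscal, qconj, qnorm2; simpl; apply quat_eq; field;
  intro E; apply N; nra.
Qed.

Definition alpha (mu : quat) : quat := qscal (1/2) (mu + qinv mu) - 1.
Definition beta (mu : quat) : quat := qI * qscal (1/2) (qinv mu - mu).
Definition gamma (mu : quat) : quat := qI * (1 + mu) * qinv (1 - mu).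

Section ComplexParameter.
Variable mu : quat.
Hypotheses (mu_C : in_C mu) (mu_neq0 : mu <> 0) (mu_neq1 : mu <> 1).

Let mu_coords : exists x y, mu = mkQ x y 0 0 /\
  (x * x + y * y <> 0)%R /\ ((1 - x) * (1 - x) + y * y <> 0)%R.
Proof.
  destruct mu as [x y z w]; destruct mu_C as [Hz Hw]; simpl in Hz, Hw; subst z w.
  exists x, y; split; [reflexivity|split].
  - pose proof (qnorm2_neq0 _ mu_neq0) as N; unfold qnorm2 in N; simpl in N; nra.
  - pose proof (qnorm2_neq0 _ (qsub_neq0 _ _ mu_neq1)) as N; unfold qnorm2 in N;
      simpl in N; nra.
Qed.

Ltac complex_calc :=
  destruct mu_coords as (x & y & -> & N0 & N1);
  unfold alpha, beta, gamma;
  replace (1 - mkQ x y 0 0) with (mkQ (1 - x) (- y) 0 0) by qring;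
  rewrite !qinv_complex by lra;
  cbv beta iota zeta delta [qsub qadd qopp qscal qmul qone qzero qI qr qi qj qk];
  apply quat_eq; field; split; lra.

Lemma beta_gamma_alpha : beta mu = gamma mu * alpha mu.
Proof. complex_calc. Qed.

Lemma gamma_alpha_comm : gamma mu * alpha mu = alpha mu * gamma mu.
Proof. complex_calc. Qed.

Lemma alpha_gamma_sq : alpha mu * (1 + gamma mu * gamma mu) = - (1 + 1).
Proof. complex_calc. Qed.

End ComplexParameter.

Definition conj_by (m x : quat) : quat := m * x * qinv m.

Lemma conj_by_add m x y : conj_by m (x + y) = conj_by m x + conj_by m y.
Proof. unfold conj_by; qring. Qed.

Lemma conj_by_opp m x : conj_by m (- x) = - conj_by m x.
Proof. unfold conj_by; qring. Qed.

Section ConjBy.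
Variable m : quat.
Hypothesis m_neq0 : m <> 0.

Lemma conj_by_mul x y : conj_by m (x * y) = conj_by m x * conj_by m y.
Proof.
  unfold conj_by; rewrite !qmul_assoc, <- (qmul_assoc (m * x) (qinv m) m).
  rewrite qmulVl, qmul1r by exact m_neq0; reflexivity.
Qed.

Lemma conj_by_one : conj_by m 1 = 1.
Proof. unfold conj_by; transitivity (m * qinv m); [qring | exact (qmulV m m_neq0)]. Qed.

Lemma conj_by_cancel x y N : (x * m * N - y * m) * qinv m = x * conj_by m N - y.
Proof.
  transitivity (x * conj_by m N - y * (m * qinv m)); [unfold conj_by; qring|].
  rewrite qmulV by exact m_neq0; qring.
Qed.

End ConjBy.

Section FamilyConstants.
Variables m mu : quat.
Hypotheses (m_neq0 : m <> 0) (mu_C : in_C mu) (mu_neq0 : mu <> 0) (mu_neq1 : mu <> 1).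

Lemma a_hat_sub1 : a_hat m mu - 1 = conj_by m (alpha mu).
Proof.
  unfold alpha; rewrite <- (conj_by_one m m_neq0) at 1.
  unfold a_hat, conj_by; qring.
Qed.

Lemma b_hat_rho_a_hat : b_hat m mu = rho_of m mu * (a_hat m mu - 1).
Proof.
  rewrite a_hat_sub1; change (b_hat m mu) with (conj_by m (beta mu));
  change (rho_of m mu) with (conj_by m (gamma mu)).
  rewrite <- conj_by_mul, beta_gamma_alpha by assumption; reflexivity.
Qed.

Lemma rho_a_hat_comm : rho_of m mu * (a_hat m mu - 1) = (a_hat m mu - 1) * rho_of m mu.
Proof.
  rewrite a_hat_sub1; change (rho_of m mu) with (conj_by m (gamma mu)).
  rewrite <- !conj_by_mul, gamma_alpha_comm by assumption; reflexivity.
Qed.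

Lemma a_hat_rho_sq : (a_hat m mu - 1) * (1 + rho_of m mu * rho_of m mu) = - (1 + 1).
Proof.
  rewrite a_hat_sub1; change (rho_of m mu) with (conj_by m (gamma mu)).
  rewrite <- (conj_by_one m m_neq0) at 1 2 3.
  rewrite <- conj_by_mul, <- conj_by_add, <- conj_by_mul, alpha_gamma_sq by assumption.
  rewrite conj_by_opp, conj_by_add, conj_by_one by exact m_neq0; reflexivity.
Qed.

End FamilyConstants.

Section NormalAlgebra.
Variables R rho A : quat.
Hypotheses (R_sq : R * R + 1 = 0) (rho_A_comm : rho * A = A * rho)
  (A_rho_sq : A * (1 + rho * rho) = - (1 + 1)).

Lemma conj_by_sq m : m <> 0 -> conj_by m R * conj_by m R + 1 = 0.
Proof.
  intro Hm; rewrite <- (conj_by_mul m Hm), <- (conj_by_one m Hm) at 1.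
  rewrite <- conj_by_add, R_sq; unfold conj_by; qring.
Qed.

Lemma rho_add_neq0 : rho + R <> 0.
Proof.
  intro E.
  assert (A_rho_sq0 : A * (1 + rho * rho) = 0).
  { transitivity (A * (R * R + 1) + A * ((rho + R) * rho - R * (rho + R))); [qring|].
    rewrite R_sq, E; qring. }
  rewrite A_rho_sq in A_rho_sq0; apply (f_equal qr) in A_rho_sq0; simpl in A_rho_sq0; lra.
Qed.

Lemma sandwich_comm :
  (rho + R) * A * (rho + R) * R = R * ((rho + R) * A * (rho + R)).
Proof.
  transitivity (R * ((rho + R) * A * (rho + R))
    + (A * (1 + rho * rho) * R - R * (A * (1 + rho * rho)))
    + (rho * A - A * rho) * rho * R - R * (rho * A - A * rho) * rho
    - R * (rho * A - A * rho) * R - (rho * A - A * rho)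
    + rho * A * (R * R + 1) + R * A * (R * R + 1)
    - (R * R + 1) * A * rho - (R * R + 1) * A * R); [qring|].
  rewrite A_rho_sq, rho_A_comm, R_sq; qring.
Qed.

Lemma willmore_coeff_f : rho * A * (rho + R) * R + A * (rho + R) = - (1 + 1) * R.
Proof.
  transitivity (A * (1 + rho * rho) * R + (rho * A - A * rho) * rho * R
    + rho * A * (R * R + 1) - (rho * A - A * rho)); [qring|].
  rewrite A_rho_sq, rho_A_comm, R_sq; qring.
Qed.

Lemma willmore_coeff_fs : A * (rho + R) * R - rho * A * (rho + R) = 1 + 1.
Proof.
  transitivity (A * (R * R + 1) - A * (1 + rho * rho) + (A * rho - rho * A) * (rho + R));
    [qring|].
  rewrite A_rho_sq, rho_A_comm, R_sq; qring.
Qed.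

Lemma willmore_identity u v :
  (u * R - v) * qinv (rho + R) =
  qscal (- (1/2)) ((u * (rho * A) + v * A) * conj_by (rho + R) R - (v * (rho * A) - u * A)).
Proof.
  assert (E : u * R - v = qscal (- (1/2)) ((u * (rho * A) + v * A) * (rho + R) * R
                                          - (v * (rho * A) - u * A) * (rho + R))).
  { transitivity (qscal (- (1/2)) (u * (- (1 + 1) * R) + v * (1 + 1))); [qring|].
    rewrite <- willmore_coeff_f, <- willmore_coeff_fs; f_equal; qring. }
  rewrite E, qscal_mull, conj_by_cancel by exact rho_add_neq0; reflexivity.
Qed.

Lemma normal_coeff :
  (rho * A + R * A) * conj_by (rho + R) R = R * (rho * A) - A.
Proof.
  transitivity ((rho + R) * A * (rho + R) * R * qinv (rho + R));
    [unfold conj_by; rewrite !qmul_assoc; f_equal; f_equal; qring|].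
  rewrite sandwich_comm, !qmul_assoc, <- (qmul_assoc _ (rho + R) (qinv (rho + R))).
  rewrite qmulV, qmul1r by exact rho_add_neq0.
  transitivity (R * (rho * A) + (R * R + 1) * A - A); [qring|].
  rewrite R_sq; qring.
Qed.
End NormalAlgebra.

Lemma derivable_pt_lim_mul_const f c x l :
  derivable_pt_lim f x l -> derivable_pt_lim (fun s => f s * c)%R x (l * c)%R.
Proof.
  intro Hf; replace (l * c)%R with (l * c + f x * 0)%R by ring.
  apply (derivable_pt_lim_mult f (fct_cte c)); [exact Hf | apply derivable_pt_lim_const].
Qed.

Ltac derive_linear :=
  repeat (apply derivable_pt_lim_plus || apply derivable_pt_lim_minus
          || apply derivable_pt_lim_opp || apply derivable_pt_lim_mul_const
          || apply derivable_pt_lim_scal); assumption.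

Lemma hderiv_add g1 g2 t D1 D2 : hderiv g1 t D1 -> hderiv g2 t D2 ->
  hderiv (fun s => g1 s + g2 s) t (D1 + D2).
Proof. intros (? & ? & ? & ?) (? & ? & ? & ?); repeat split; simpl; derive_linear. Qed.

Lemma hderiv_sub g1 g2 t D1 D2 : hderiv g1 t D1 -> hderiv g2 t D2 ->
  hderiv (fun s => g1 s - g2 s) t (D1 - D2).
Proof. intros (? & ? & ? & ?) (? & ? & ? & ?); repeat split; simpl; derive_linear. Qed.

Lemma hderiv_mulr g t D c : hderiv g t D -> hderiv (fun s => g s * c) t (D * c).
Proof. intros (? & ? & ? & ?); repeat split; simpl; derive_linear. Qed.

Lemma hderiv_scal g t D c : hderiv g t D -> hderiv (fun s => qscal c (g s)) t (qscal c D).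
Proof. intros (? & ? & ? & ?); repeat split; simpl; derive_linear. Qed.

Lemma hderiv_eq g t D D' : hderiv g t D -> D = D' -> hderiv g t D'.
Proof. intros HD <-; exact HD. Qed.

Lemma hderiv_unique g t D1 D2 : hderiv g t D1 -> hderiv g t D2 -> D1 = D2.
Proof.
  intros (? & ? & ? & ?) (? & ? & ? & ?); destruct D1, D2; simpl in *;
  f_equal; eapply uniqueness_limite; eassumption.
Qed.

Section Surfaces.
Variable U : pt -> Prop.

Lemma assoc_partials f fs P Q p fx fy :
  pd_x f p fx -> pd_y f p fy -> pd_x fs p (- fy) -> pd_y fs p fx ->
  pd_x (fun q => f q * P + fs q * Q) p (fx * P - fy * Q) /\
  pd_y (fun q => f q * P + fs q * Q) p (fy * P + fx * Q).
Proof.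
  intros Fx Fy FSx FSy; split.
  - eapply hderiv_eq; [apply hderiv_add; apply hderiv_mulr; eassumption | qring].
  - apply hderiv_add; apply hderiv_mulr; assumption.
Qed.

Lemma conjugate_surface_assoc f fs P Q : conjugate_surface U f fs ->
  conjugate_surface U (fun p => f p * P + fs p * Q) (fun p => fs p * P - f p * Q).
Proof.
  intros Hfs p Up; destruct (Hfs p Up) as (fx & fy & Fx & Fy & FSx & FSy).
  destruct (assoc_partials f fs P Q p fx fy Fx Fy FSx FSy) as [Gx Gy].
  exists (fx * P - fy * Q), (fy * P + fx * Q); split; [exact Gx | split; [exact Gy | split]].
  - eapply hderiv_eq; [apply hderiv_sub; apply hderiv_mulr; eassumption | qring].
  - eapply hderiv_eq; [apply hderiv_sub; apply hderiv_mulr; eassumption | qring].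
Qed.

Lemma right_normal_sq f Rn p : conformal_immersion U f -> right_normal U f Rn -> U p ->
  Rn p * Rn p + 1 = 0.
Proof.
  intros Hf HRn Up.
  destruct (Hf p Up) as (fx0 & fy0 & Fx0 & _ & fx_neq0 & _).
  destruct (HRn p Up) as (fx & fy & Fx & Fy & Ey & Ex).
  rewrite (hderiv_unique _ _ _ _ Fx0 Fx) in fx_neq0.
  assert (E : fx * (Rn p * Rn p + 1) = 0).
  { transitivity (- (- fx) + - (fy * Rn p) + (fy + fx * Rn p) * Rn p); [qring|].
    rewrite Ex, Ey; qring. }
  transitivity (qinv fx * (fx * (Rn p * Rn p + 1))).
  - rewrite qmul_assoc, qmulVl by exact fx_neq0; qring.
  - rewrite E; qring.
Qed.

(* [df P + df^* Q = df (P + R Q)] reduces the right normal condition to the coefficients. *)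
Lemma right_normal_assoc f fs Rn N P Q :
  right_normal U f Rn -> conjugate_surface U f fs ->
  (forall p, U p -> N p * N p + 1 = 0 /\ (P + Rn p * Q) * N p = Rn p * P - Q) ->
  right_normal U (fun p => f p * P + fs p * Q) N.
Proof.
  intros HRn Hfs HN p Up.
  destruct (HN p Up) as [N_sq N_coeff].
  destruct (HRn p Up) as (fx & fy & Fx & Fy & Ey & _).
  destruct (Hfs p Up) as (fx' & fy' & Fx' & Fy' & FSx & FSy).
  rewrite (hderiv_unique _ _ _ _ Fx' Fx) in FSy.
  rewrite (hderiv_unique _ _ _ _ Fy' Fy) in FSx.
  destruct (assoc_partials f fs P Q p fx fy Fx Fy FSx FSy) as [Gx Gy].
  assert (Egy : fy * P + fx * Q = - ((fx * P - fy * Q) * N p)).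
  { rewrite Ey; transitivity (- (fx * ((P + Rn p * Q) * N p))); [|qring].
    rewrite N_coeff; qring. }
  exists (fx * P - fy * Q), (fy * P + fx * Q); split; [exact Gx | split; [exact Gy | split]].
  - exact Egy.
  - rewrite Egy; transitivity (- (fx * P - fy * Q) + (fx * P - fy * Q) * (N p * N p + 1));
      [rewrite N_sq; qring | qring].
Qed.

Lemma right_normal_scal f Rn c : right_normal U f Rn ->
  right_normal U (fun p => qscal c (f p)) Rn.
Proof.
  intros HRn p Up; destruct (HRn p Up) as (fx & fy & Fx & Fy & Ey & Ex).
  exists (qscal c fx), (qscal c fy).
  split; [apply hderiv_scal, Fx | split; [apply hderiv_scal, Fy | split]].
  - rewrite Ey; qring.
  - transitivity (qscal c (- fx)); [qring|]; rewrite Ex; qring.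
Qed.

Lemma conjugate_surface_scal f fs c : conjugate_surface U f fs ->
  conjugate_surface U (fun p => qscal c (f p)) (fun p => qscal c (fs p)).
Proof.
  intros Hfs p Up; destruct (Hfs p Up) as (fx & fy & Fx & Fy & FSx & FSy).
  exists (qscal c fx), (qscal c fy).
  split; [apply hderiv_scal, Fx | split; [apply hderiv_scal, Fy | split]].
  - eapply hderiv_eq; [apply hderiv_scal, FSx | qring].
  - apply hderiv_scal, FSy.
Qed.
End Surfaces.

Close Scope quat_scope.

Theorem mainTheorem19
  (U : pt -> Prop) (f fs Rn : pt -> quat) (mu m : quat) :
  is_open U ->
  minimal_conformal_immersion U f ->
  right_normal U f Rn ->
  conjugate_surface U f fs ->
  in_C mu -> mu <> qzero -> mu <> qone ->
  m <> qzero ->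
  let ah := a_hat m mu in
  let bh := b_hat m mu in
  let rho := rho_of m mu in
  let h := fun p => qadd (qmul (f p) bh) (qmul (fs p) (qsub ah qone)) in
  let hs := fun p => qsub (qmul (fs p) bh) (qmul (f p) (qsub ah qone)) in
  let Rh := fun p => qmul (qmul (qadd rho (Rn p)) (Rn p)) (qinv (qadd rho (Rn p))) in
  let fsharp := fun p => qmul (qsub (qmul (f p) (Rn p)) (fs p)) (qinv (qadd (Rn p) rho)) in
  (* h* is a conjugate of h and R_h is the right normal of h *)
  conjugate_surface U h hs /\
  right_normal U h Rh /\
  (* main identity *)
  (forall p, U p -> fsharp p = qscal (- (1/2)) (willmore_assoc h Rh hs p)) /\
  (* consequence: f# is the associated Willmore surface of g = -h/2,
     a member of the right associated family of f, with right normal R_g = R_h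
     and conjugate g* = -h*/2 *)
  (let g := fun p => qscal (- (1/2)) (h p) in
   let gs := fun p => qscal (- (1/2)) (hs p) in
   (exists P Q : quat, forall p, U p -> g p = qadd (qmul (f p) P) (qmul (fs p) Q)) /\
   right_normal U g Rh /\
   conjugate_surface U g gs /\
   (forall p, U p -> fsharp p = willmore_assoc g Rh gs p)).
Proof.
  intros _ [Hconf _] HRn Hfs HC Hmu0 Hmu1 Hm ah bh rho h hs Rh fsharp.
  assert (Hb : (bh = rho * (ah - 1))%H) by exact (b_hat_rho_a_hat m mu Hm HC Hmu0 Hmu1).
  assert (Hcomm : (rho * (ah - 1) = (ah - 1) * rho)%H)
    by exact (rho_a_hat_comm m mu Hm HC Hmu0 Hmu1).
  assert (Hsq : ((ah - 1) * (1 + rho * rho) = - (1 + 1))%H)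
    by exact (a_hat_rho_sq m mu Hm HC Hmu0 Hmu1).
  pose proof (fun p Up => right_normal_sq U f Rn p Hconf HRn Up) as HR.
  assert (MI : forall p, U p -> fsharp p = qscal (- (1/2)) (willmore_assoc h Rh hs p)).
  { intros p Up; unfold fsharp, willmore_assoc, h, hs.
    rewrite Hb, (qadd_comm (Rn p)).
    exact (willmore_identity _ _ _ (HR p Up) Hcomm Hsq (f p) (fs p)). }
  assert (RN : right_normal U h Rh).
  { apply right_normal_assoc with (1 := HRn) (2 := Hfs); intros p Up; split.
    - apply conj_by_sq, rho_add_neq0 with (A := qsub ah qone); auto.
    - rewrite Hb; exact (normal_coeff _ _ _ (HR p Up) Hcomm Hsq). }
  split; [exact (conjugate_surface_assoc U f fs bh (qsub ah qone) Hfs) | ].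
  split; [exact RN | split; [exact MI | ]].
  intros g gs; split; [|split; [|split]].
  - exists (qscal (- (1/2)) bh), (qscal (- (1/2)) (qsub ah qone)); intros p _.
    apply qscal_mul_add.
  - apply right_normal_scal, RN.
  - apply conjugate_surface_scal, conjugate_surface_assoc, Hfs.
  - intros p Up; rewrite MI by exact Up; apply qscal_mul_sub.
Qed.
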